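(* Let $L_i,L_j$ be two smooth curves on a smooth surface $S$ meeting transversally at exactly one point $P$. Consider a sequence of blowups $Y\to S$: first blow up $P$; then, at each subsequent step, blow up one of the two points where the most recently created exceptional $(-1)$-curve meets its two neighbouring visible curves (the visible curves being the strict transforms of $L_i,L_j$ and of the exceptional curves). Let $E$ be the last exceptional curve, and let $w_i,w_j$ be the coefficients of $E$ in the total transforms of $L_i$ and $L_j$ on $Y$. Let $\Gamma$ be the dual graph of the visible curves on $Y$; it is a chain from $v_i$ (the vertex of $L_i$) to $v_j$ (the vertex of $L_j$), where an exceptional curve $C$ is marked $-C^2$ and $v_i$, $v_j$ are marked by the number of blowups centered at points of the strict transform of $L_i$, respectively $L_j$. Let $\Gamma_i$ be the subchain on the side of $E$ containing $v_i$ and $\Gamma_j$ the subchain on the side containing $v_j$ (both not containing $E$). Then (1) $\det\Gamma_i=w_i$ and $\det(\Gamma_i-v_i)=w_j$; (2) $\det\Gamma_j=w_j$ and $\det(\Gamma_j-v_j)=w_i$. Moreover, the assignment of $(w_i,w_j)$ to such a sequence of blowups is a bijection between all such sequences and the pairs of coprime positive integers $(w_i,w_j)$ (equivalently, positive rational numbers $w_j/w_i$ in lowest terms).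
   Context: The determinant of a chain (or of any marked graph) is the determinant of the matrix with the marks on the diagonal and $-1$ for each pair of adjacent vertices, $0$ otherwise; the empty chain has determinant $1$. $\Gamma_i-v_i$ is the chain $\Gamma_i$ with the vertex $v_i$ removed. *)

From mathcomp Require Import all_boot all_order all_algebra.
Set Implicit Arguments. Unset Strict Implicit. Unset Printing Implicit Defensive.
Import GRing.Theory Num.Theory.

(* A visible curve on the current surface is recorded as (mark, a, b):
   - mark = -C^2 for an exceptional curve C; for the strict transform of L_i
     (resp. L_j) it is the number of blowups so far centered on it;
   - a, b = coefficient of the curve in the total transforms of L_i, L_j
     (for the strict transforms of L_i and L_j themselves: (1,0) and (0,1)).
   The dual graph of visible curves is a chain, stored left (v_i) to right
   (v_j) as a sequence; a state also records the position of the most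
   recently created exceptional (-1)-curve. *)
Definition curve := (nat * nat * nat)%type.
Definition mark (c : curve) : nat := c.1.1.
Definition coef_i (c : curve) : nat := c.1.2.
Definition coef_j (c : curve) : nat := c.2.
Definition state := (seq curve * nat)%type.

Definition dflt : curve := (0, 0, 0).

(* one more blowup centered on the curve at position i: its mark grows by 1
   (self-intersection drops by one, or one more blowup on L_i / L_j). *)
Definition bump (i : nat) (c : seq curve) : seq curve :=
  set_nth dflt c i (let: (m, a, b) := nth dflt c i in (m.+1, a, b)).

(* After blowing up P on S: chain L_i -- E_1 -- L_j. *)
Definition init_state : state := ([:: (1, 1, 0); (1, 1, 1); (1, 0, 1)], 1).

(* Blow up the point where the newest exceptional curve (position k) meets its
   left neighbour (left = true) or its right neighbour (left = false).  The new
   (-1)-curve is inserted between them; its coefficient in the total transform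
   of L_i (resp. L_j) is the sum of those of the two curves through the center. *)
Definition step (st : state) (left : bool) : state :=
  let: (c, k) := st in
  let n := if left then k.-1 else k.+1 in
  let E := nth dflt c k in
  let N := nth dflt c n in
  let new : curve := (1, coef_i E + coef_i N, coef_j E + coef_j N) in
  let c' := bump n (bump k c) in
  let p := if left then k else k.+1 in
  (take p c' ++ new :: drop p c', p).

(* The sequence of blowups determined by the list of choices after the first one. *)
Definition blowups (s : seq bool) : state := foldl step init_state s.

Definition chain_marks (s : seq bool) : seq nat := map mark (blowups s).1.
Definition last_pos (s : seq bool) : nat := (blowups s).2.
Definition w_i (s : seq bool) : nat := coef_i (nth dflt (blowups s).1 (last_pos s)).
Definition w_j (s : seq bool) : nat := coef_j (nth dflt (blowups s).1 (last_pos s)).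

Definition chain_mx (m : seq nat) : 'M[int]_(size m) :=
  \matrix_(x < size m, y < size m)
    (if x == y then Posz (nth 0%N m x)
     else if (x.+1 == y :> nat) || (y.+1 == x :> nat) then (-1)%R else 0%R).
Definition chain_det (m : seq nat) : int := \det (chain_mx m).

From Pilot Require Import Defs.
From mathcomp Require Import all_boot all_order all_algebra.
From mathcomp Require Import zify ring.
Set Implicit Arguments. Unset Strict Implicit. Unset Printing Implicit Defensive.
Import GRing.Theory Num.Theory.

(* The determinant of a chain with marks x_1, ..., x_n is a continuant: the
   (0,0) entry of the product of the transfer matrices [[x_k, -1], [1, 0]],
   whose (1,0) and (0,1) entries are, up to sign, the determinants of the
   chain without its first, resp. last, vertex.
   Write the chain as Gamma_i, E, Gamma_j with E the newest (-1)-curve and let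
   u = (a, b), v = (c, d) be the coefficient vectors of its two neighbours, so
   that E has u + v = (w_i, w_j).  Blowing up on the left replaces (u, v) by
   (u, u + v), blowing up on the right by (u + v, v); so [u v] is the product
   of the Stern-Brocot generators [[1,1],[0,1]], [[1,0],[1,1]] along the
   choices, and each blowup multiplies the transfer products of Gamma_i and
   Gamma_j by elementary matrices in a way that keeps them equal to
   [[a+c, -a], [b+d, -b]] and [[b+d, -(a+c)], [d, -c]].
   Read from the first choice on, (w_i, w_j) arises from (1, 1) by the moves
   (p, q) -> (p + q, q), (p, p + q): the subtractive Euclidean algorithm run
   backwards, which reaches every coprime pair exactly once. *)

Section TwoByTwo.
Local Open Scope ring_scope.

Definition mx2 {R : Type} (a b c d : R) : 'M[R]_2 :=
  \matrix_(i, j) if i == 0 then (if j == 0 then a else b)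
                 else (if j == 0 then c else d).

Lemma mul_mx2 (R : pzSemiRingType) (a b c d a' b' c' d' : R) :
  mx2 a b c d *m mx2 a' b' c' d' =
  mx2 (a * a' + b * c') (a * b' + b * d') (c * a' + d * c') (c * b' + d * d').
Proof.
apply/matrixP => i j; rewrite !mxE !big_ord_recl big_ord0 !mxE addr0.
by case: i j => [[|[|//]] ?] [[|[|//]] ?].
Qed.

Lemma mx2_eta (R : Type) (A : 'M[R]_2) : A = mx2 (A 0 0) (A 0 1) (A 1 0) (A 1 1).
Proof.
apply/matrixP => i j; rewrite mxE.
by case: i j => [[|[|//]] ?] [[|[|//]] ?]; congr (A _ _); apply: val_inj.
Qed.

Lemma mx2_1 (R : pzSemiRingType) : 1 = mx2 1 0 0 1 :> 'M[R]_2.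
Proof. by apply/matrixP => i j; rewrite !mxE; case: i j => [[|[|//]] ?] [[|[|//]] ?]. Qed.

End TwoByTwo.

Section ChainDeterminant.
Local Open Scope ring_scope.

Lemma chain_det_nil : chain_det [::] = 1.
Proof. exact: det_mx00. Qed.

Lemma chain_det_seq1 x : chain_det [:: x] = Posz x.
Proof. by rewrite /chain_det det_mx11 mxE. Qed.

Lemma chain_mx_minor x m : row' ord0 (col' ord0 (chain_mx (x :: m))) = chain_mx m.
Proof. by apply/matrixP => i j; rewrite !mxE /= !eqSS. Qed.

Lemma chain_mx_minor01 x y r :
  row' ord0 (col' ord0 (row' ord0 (col' (lift ord0 ord0) (chain_mx [:: x, y & r]))))
  = chain_mx r.
Proof. by apply/matrixP => i j; rewrite !mxE -val_eqE /= /bump /= !add1n !eqSS. Qed.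

Lemma chain_det_cons2 x y r :
  chain_det [:: x, y & r] = Posz x * chain_det (y :: r) - chain_det r.
Proof.
rewrite /chain_det (expand_det_row _ ord0) !big_ord_recl big1 ?addr0; last first.
  by move=> i _; rewrite mxE mul0r.
rewrite /cofactor (chain_mx_minor x (y :: r)) !mxE /= expr0 expr1 mul1r !mulN1r.
congr (_ - _); rewrite (expand_det_col _ ord0) big_ord_recl big1 ?addr0; last first.
  by move=> i _; rewrite !mxE mul0r.
by rewrite /cofactor (chain_mx_minor01 x y r) !mxE /= expr0 mul1r mulN1r opprK.
Qed.

Definition transfer_mx (x : nat) : 'M[int]_2 := mx2 (Posz x) (-1) 1 0.

Definition continuant_mx (m : seq nat) : 'M[int]_2 := \prod_(x <- m) transfer_mx x.

Lemma continuant_mx_cons x m :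
  continuant_mx (x :: m) = transfer_mx x *m continuant_mx m.
Proof. by rewrite /continuant_mx big_cons mulmxE. Qed.

Lemma continuant_mx_rcons m x :
  continuant_mx (rcons m x) = continuant_mx m *m transfer_mx x.
Proof. by rewrite /continuant_mx big_rcons mulmxE. Qed.

Lemma chain_det_continuant m : chain_det m = continuant_mx m 0 0.
Proof.
suff [] : chain_det m = continuant_mx m 0 0 /\
          forall x, chain_det (x :: m) = continuant_mx (x :: m) 0 0 by [].
elim: m => [|y m [IHm IHym]].
  split=> [|x]; first by rewrite chain_det_nil /continuant_mx big_nil mxE.
  by rewrite chain_det_seq1 /continuant_mx big_seq1 mxE.
split=> // x; rewrite chain_det_cons2 IHym !continuant_mx_cons.
rewrite [continuant_mx m]mx2_eta !mul_mx2 !mxE /=.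
by rewrite IHm mul1r mul0r addr0 !mulN1r.
Qed.

Lemma chain_det_behead m : m != [::] -> chain_det (behead m) = continuant_mx m 1 0.
Proof.
case: m => // x m _; rewrite chain_det_continuant continuant_mx_cons.
by rewrite [continuant_mx m]mx2_eta mul_mx2 !mxE /= mul1r mul0r addr0.
Qed.

Lemma chain_det_take_pred m :
  m != [::] -> chain_det (take (size m).-1 m) = - continuant_mx m 0 1.
Proof.
case/lastP: m => // m x _; rewrite size_rcons -cats1 take_size_cat // cats1.
rewrite chain_det_continuant continuant_mx_rcons [continuant_mx m]mx2_eta mul_mx2 !mxE /=.
by rewrite mulrN1 mulr0 addr0 opprK.
Qed.

Lemma transfer_mxSr x : transfer_mx x.+1 = transfer_mx x *m mx2 1 0 (-1) 1.
Proof. by rewrite mul_mx2; congr mx2; rewrite ?PoszD; ring. Qed.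

Lemma transfer_mxSl x : transfer_mx x.+1 = mx2 1 1 0 1 *m transfer_mx x.
Proof. by rewrite mul_mx2; congr mx2; rewrite ?PoszD; ring. Qed.

End ChainDeterminant.

Section SternBrocot.
Local Open Scope ring_scope.

Definition sb_gen (left : bool) : 'M[nat]_2 :=
  if left then mx2 1 1 0 1 else mx2 1 0 1 1.

Definition sb_mx (s : seq bool) : 'M[nat]_2 := \prod_(x <- s) sb_gen x.

Definition sb_weights (s : seq bool) : nat * nat :=
  let A := sb_mx s in (A 0 0 + A 0 1, A 1 0 + A 1 1).

Lemma sb_mx_cons x s : sb_mx (x :: s) = sb_gen x *m sb_mx s.
Proof. by rewrite /sb_mx big_cons mulmxE. Qed.

Lemma sb_mx_rcons s x : sb_mx (rcons s x) = sb_mx s *m sb_gen x.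
Proof. by rewrite /sb_mx big_rcons mulmxE. Qed.

Lemma sb_weights_nil : sb_weights [::] = (1, 1)%N.
Proof. by rewrite /sb_weights /sb_mx big_nil !mxE. Qed.

Lemma sb_weights_cons x s :
  sb_weights (x :: s) =
  let: (p, q) := sb_weights s in if x then (p + q, q)%N else (p, p + q)%N.
Proof.
rewrite /sb_weights sb_mx_cons; move: (sb_mx s) => A; rewrite [A]mx2_eta.
by case: x; rewrite mul_mx2 !mxE /= !mul1r !mul0r ?add0r ?addr0; congr pair; ring.
Qed.

End SternBrocot.

Lemma sb_weights_pos_coprime s :
  [&& 0 < (sb_weights s).1, 0 < (sb_weights s).2
    & coprime (sb_weights s).1 (sb_weights s).2].
Proof.
elim: s => [|x s IH]; first by rewrite sb_weights_nil.
rewrite sb_weights_cons; case: (sb_weights s) IH => p q /and3P[p_gt0 q_gt0 cop_pq].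
case: x; rewrite /= addn_gt0 p_gt0 q_gt0 /coprime ?gcdnDl //.
by rewrite gcdnC gcdnDr gcdnC.
Qed.

Lemma sb_weights_head x s :
  x = ((sb_weights (x :: s)).2 < (sb_weights (x :: s)).1).
Proof.
have /and3P[p_gt0 q_gt0 _] := sb_weights_pos_coprime s.
rewrite sb_weights_cons; case: (sb_weights s) p_gt0 q_gt0 => p q /= p_gt0 q_gt0.
by case: x => /=; [apply/esym | apply/esym/negbTE]; lia.
Qed.

Lemma sb_weights_cons_neq x s : sb_weights (x :: s) <> (1, 1).
Proof.
have /and3P[p_gt0 q_gt0 _] := sb_weights_pos_coprime s.
rewrite sb_weights_cons; case: (sb_weights s) p_gt0 q_gt0 => p q /= ? ?.
by case: x => -[]; lia.
Qed.

Lemma sb_weights_inj : injective sb_weights.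
Proof.
elim=> [|x1 s1 IH] [|x2 s2] //; rewrite ?sb_weights_nil.
- by move=> /esym /sb_weights_cons_neq.
- by move=> /sb_weights_cons_neq.
move=> E; have Ex : x1 = x2 by rewrite (sb_weights_head x1 s1) (sb_weights_head x2 s2) E.
subst x2; congr (_ :: _); apply: IH; move: E; rewrite !sb_weights_cons.
case: (sb_weights s1) (sb_weights s2) => [p1 q1] [p2 q2].
by case: x1 => -[] *; congr pair; lia.
Qed.

Lemma sb_weights_surj p q :
  0 < p -> 0 < q -> coprime p q -> exists s, sb_weights s = (p, q).
Proof.
elim: {p q}(p + q) {-2}p {-2}q (leqnn (p + q)) => [|n IH] p q le_pq_n p_gt0 q_gt0 cop_pq.
  lia.
case: (ltngtP p q) => [lt_pq | lt_qp | eq_pq].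
- have cop' : coprime p (q - p) by rewrite /coprime -gcdnDl subnKC ?(ltnW lt_pq).
  have [s E] : exists s, sb_weights s = (p, q - p).
    by apply: IH cop' => //; [lia | rewrite subn_gt0].
  by exists (false :: s); rewrite sb_weights_cons E /= subnKC ?(ltnW lt_pq).
- have cop' : coprime (p - q) q.
    by rewrite /coprime gcdnC -gcdnDl subnKC ?(ltnW lt_qp) // gcdnC.
  have [s E] : exists s, sb_weights s = (p - q, q).
    by apply: IH cop' => //; [lia | rewrite subn_gt0].
  by exists (true :: s); rewrite sb_weights_cons E /= subnK ?(ltnW lt_qp).
- exists [::]; rewrite sb_weights_nil; move: cop_pq; rewrite -eq_pq /coprime gcdnn.
  by move/eqP ->.
Qed.

Lemma bump_cat L c i : Defs.bump (size L + i) (L ++ c) = L ++ Defs.bump i c.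
Proof. by elim: L => //= x L IH; rewrite /Defs.bump /= in IH *; rewrite IH. Qed.

Lemma step_cat L c k left :
  step (L ++ c, size L + k.+1) left =
  let: (c', k') := step (c, k.+1) left in (L ++ c', size L + k').
Proof.
have predE : (size L + k.+1).-1 = size L + k by rewrite addnS.
rewrite /step; case: left => /=; rewrite ?predE -?addnS !bump_cat;
  by rewrite !(nth_cat, take_cat, drop_cat) !ltnNge !leq_addr /= !addKn -?catA.
Qed.

Definition chain_shape (st : state) (a b c d : nat) : Prop :=
  exists L R mN mM,
    st = (L ++ [:: (mN, a, b), (1, a + c, b + d), (mM, c, d) & R], size L + 1)
    /\ continuant_mx (rcons (map mark L) mN)
       = mx2 (Posz (a + c)) (- Posz a)%R (Posz (b + d)) (- Posz b)%R
    /\ continuant_mx (mM :: map mark R)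
       = mx2 (Posz (b + d)) (- Posz (a + c))%R (Posz d) (- Posz c)%R.

Lemma chain_shape_stepl st a b c d :
  chain_shape st a b c d -> chain_shape (step st true) a b (a + c) (b + d).
Proof.
move=> [L [R [mN [mM [-> [left_mx right_mx]]]]]].
exists L, ((mM, c, d) :: R), mN.+1, 2; split; [|split].
- by rewrite step_cat /= (addnC (a + c)) (addnC (b + d)).
- rewrite continuant_mx_rcons transfer_mxSr mulmxA -continuant_mx_rcons left_mx mul_mx2.
  by congr mx2; rewrite !PoszD; ring.
- rewrite /= continuant_mx_cons right_mx mul_mx2.
  by congr mx2; rewrite !PoszD; ring.
Qed.

Lemma chain_shape_stepr st a b c d :
  chain_shape st a b c d -> chain_shape (step st false) (a + c) (b + d) c d.
Proof.
move=> [L [R [mN [mM [-> [left_mx right_mx]]]]]].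
exists (rcons L (mN, a, b)), R, 2, mM.+1; split; [|split].
- by rewrite step_cat cat_rcons size_rcons addSnnS.
- rewrite map_rcons continuant_mx_rcons left_mx mul_mx2.
  by congr mx2; rewrite !PoszD; ring.
- rewrite continuant_mx_cons transfer_mxSl -mulmxA -continuant_mx_cons right_mx mul_mx2.
  by congr mx2; rewrite !PoszD; ring.
Qed.

Lemma blowups_chain_shape s :
  exists a b c d, sb_mx s = mx2 a c b d /\ chain_shape (blowups s) a b c d.
Proof.
elim/last_ind: s => [|s x [a [b [c [d [sbE shape]]]]]].
  exists 1, 0, 0, 1; split; first by rewrite /sb_mx big_nil mx2_1.
  exists [::], [::], 1, 1; split; first by [].
  by split; rewrite /continuant_mx big_seq1.
rewrite /blowups foldl_rcons -/(blowups s) sb_mx_rcons sbE.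
case: x; [exists a, b, (a + c), (b + d) | exists (a + c), (b + d), c, d].
- split; last exact: chain_shape_stepl.
  by rewrite mul_mx2 !(mulr1, mulr0, addr0, add0r).
- split; last exact: chain_shape_stepr.
  by rewrite mul_mx2 !(mulr1, mulr0, addr0, add0r).
Qed.

Lemma blowups_weights s : (w_i s, w_j s) = sb_weights s.
Proof.
have [a [b [c [d [sbE [L [R [mN [mM [stE _]]]]]]]]]] := blowups_chain_shape s.
rewrite /w_i /w_j /last_pos /sb_weights stE sbE !mxE /=.
by rewrite nth_cat ltnNge leq_addr /= addKn.
Qed.

Lemma blowups_chain_dets (s : seq bool) :
  let G := chain_marks s in
  let k := last_pos s in
  let Gi := take k G in
  let Gj := drop k.+1 G in
  [/\ chain_det Gi = Posz (w_i s),
      chain_det (behead Gi) = Posz (w_j s),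
      chain_det Gj = Posz (w_j s)
    & chain_det (take (size Gj).-1 Gj) = Posz (w_i s)].
Proof.
have [a [b [c [d [sbE [L [R [mN [mM [stE [left_mx right_mx]]]]]]]]]]] :=
  blowups_chain_shape s.
have := blowups_weights s; rewrite /sb_weights sbE !mxE /= => -[-> ->].
have /= Gj_take := @chain_det_take_pred (mM :: map mark R) isT.
rewrite /chain_marks /last_pos stE /= map_cat -addnS.
rewrite take_cat drop_cat size_map !ltnNge !leq_addr /= !addKn /= cats1.
rewrite chain_det_behead; last by case: (map mark L).
by rewrite Gj_take !chain_det_continuant left_mx right_mx !mxE /= opprK.
Qed.

Theorem theorem3p5 :
  (forall s : seq bool,
     let G := chain_marks s in
     let k := last_pos s in
     let Gi := take k G in          (* Gamma_i, starting at v_i *)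
     let Gj := drop k.+1 G in       (* Gamma_j, ending at v_j *)
     [/\ chain_det Gi = Posz (w_i s),
         chain_det (behead Gi) = Posz (w_j s),
         chain_det Gj = Posz (w_j s)
       & chain_det (take (size Gj).-1 Gj) = Posz (w_i s)])
  /\ injective (fun s : seq bool => (w_i s, w_j s))
  /\ (forall s : seq bool, [&& 0 < w_i s, 0 < w_j s & coprime (w_i s) (w_j s)])
  /\ (forall p q : nat, 0 < p -> 0 < q -> coprime p q ->
        exists s : seq bool, (w_i s, w_j s) = (p, q)).
Proof.
split; first exact: blowups_chain_dets.
split; first by move=> s1 s2 /=; rewrite !blowups_weights => /sb_weights_inj.
split; first by move=> s; have := sb_weights_pos_coprime s; rewrite -blowups_weights.
move=> p q p_gt0 q_gt0 cop_pq; have [s E] := sb_weights_surj p_gt0 q_gt0 cop_pq.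
by exists s; rewrite blowups_weights.
Qed.
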